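(* Fix an agent index $i$ with prediction horizon $N_i\ge n_i$, and suppose the input applied at time $t$ is $u_i(t) = \kappa_i(x_i(t),w_i(t))$, so that $x_i(t+1) = A_i x_i(t) + B_i u_i(t)$. If $\mathbb{QP}_i(x_i(t),w_i(t))$ is feasible at time $t$, then $\mathbb{QP}_i(x_i(t+1),w_i(t+1))$ is feasible at time $t+1$ for every $w_i(t+1)\in\mathbb{R}^p$, in particular even when $w_i(t+1)\neq S w_i(t)$.
   Context: Agent $i$: $x_i(t+1) = A_i x_i(t) + B_i u_i(t)$, $y_i(t) = C_i x_i(t)$, with $x_i(t)\in\mathbb{R}^{n_i}$, $u_i(t)\in\mathbb{R}^{m_i}$, $y_i(t)\in\mathbb{R}^q$, subject to $[x_i(t)^\top\ u_i(t)^\top]^\top \in \mathbb{Z}_i$. Standing assumptions: $(A_i,B_i)$ controllable; $\mathbb{Z}_i$ a polytope containing the origin in its interior; $K_i$ fixed with $A_i^{c} := A_i + B_i K_i$ Schur. $S\in\mathbb{R}^{p\times p}$, $Q_e\in\mathbb{R}^{q\times p}$ with $S^\rho = I$ for some positive integer $\rho$; for every eigenvalue $\lambda$ of $S$, $\begin{bmatrix} A_i-\lambda I & B_i\\ C_i & \mathbf{0}\end{bmatrix}$ has full row rank. $\Pi_i,\Gamma_i$ satisfy $A_i\Pi_i + B_i\Gamma_i = \Pi_i S$, $C_i\Pi_i = Q_e$; $L_i := \Gamma_i - K_i\Pi_i$. $w_i(t)\in\mathbb{R}^p$ is the reference of agent $i$. Fix $\epsilon_i\in(0,1)$. $\mathcal{O}_\infty^i$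 is the set of $(x,w)$ such that the sequence $x(0)=x$, $w(0)=w$, $x(k+1) = A_i^c x(k) + B_i L_i w(k)$, $w(k+1) = S w(k)$ satisfies $[x(k)^\top\ (K_i x(k) + L_i w(k))^\top]^\top \in (1-\epsilon_i)\mathbb{Z}_i$ for all $k\ge 0$. Weights: $T_i = \sum_{k=1}^{\rho}(S^k)^\top T_i^0 S^k$, $T_i^0$ symmetric positive definite; $Q_i,R_i$ symmetric positive definite; $P_i$ solves $(A_i^c)^\top P_i A_i^c - P_i + Q_i = \mathbf{0}$; $\|z\|_T^2 = z^\top Tz$. MPC problem $\mathbb{QP}_i(x_i(t),w_i(t))$: decision variables $\bar w_i(0|t)\in\mathbb{R}^p$, $v_i(k|t)\in\mathbb{R}^{m_i}$ ($k=0,\dots,N_i-1$); $x_i(0|t) = x_i(t)$, $x_i(k+1|t) = A_i^c x_i(k|t) + B_i L_i \bar w_i(k|t) + B_i v_i(k|t)$, $\bar w_i(k+1|t) = S\bar w_i(k|t)$; constraints $[x_i(k|t)^\top\ (K_i x_i(k|t) + L_i\bar w_i(k|t) + v_i(k|t))^\top]^\top\in\mathbb{Z}_i$ for $k=0,\dots,N_i-1$, and $[x_i(N_i|t)^\top\ \bar w_i(N_i|t)^\top]^\top\in\mathcal{O}_\infty^i$; minimize $\|\bar w_i(0|t)-w_i(t)\|_{T_i}^2 + \sum_{k=0}^{N_i-1}\|x_i(k|t)-\Pi_i\bar w_i(k|t)\|_{Q_i}^2 + \sum_{k=0}^{N_i-1}\|v_i(k|t)\|_{R_i}^2 + \|x_i(N_i|t)-\Pi_i\bar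 w_i(N_i|t)\|_{P_i}^2$. With optimizer $\bar w_i^*(0|t), v_i^*(0|t)$, $\kappa_i(x_i(t),w_i(t)) = K_i x_i(t) + L_i\bar w_i^*(0|t) + v_i^*(0|t)$. *)

(* scalar field: an arbitrary real closed field R (covers the reals). *)
From HB Require Import structures.
From mathcomp Require Import all_boot all_order all_algebra.
From mathcomp Require Import complex.
Set Implicit Arguments. Unset Strict Implicit. Unset Printing Implicit Defensive.
Import Order.TTheory GRing.Theory Num.Theory.
Local Open Scope ring_scope.

Section Defs.
Variable R : rcfType.

(* Embedding of a real matrix into complex matrices (to speak of complex eigenvalues). *)
Definition toC (k l : nat) (M : 'M[R]_(k, l)) : 'M[R[i]]_(k, l) :=
  map_mx (fun x => (x%:C)%C) M.

Definition schur (n : nat) (A : 'M[R]_n) : Prop :=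
  forall l : R[i], eigenvalue (toC A) l -> `|l| < 1.

Definition controllable (n m : nat) (A : 'M[R]_n) (B : 'M[R]_(n, m)) : Prop :=
  \rank (\mxrow_(k < n) (A ^+ k *m B)) = n.

Definition quad (d : nat) (M : 'M[R]_d) (z : 'cV[R]_d) : R := (z^T *m M *m z) 0 0.
Definition pos_def (d : nat) (M : 'M[R]_d) : Prop :=
  M^T = M /\ forall z : 'cV[R]_d, z != 0 -> 0 < quad M z.

Definition polytope (d : nat) (Z : 'cV[R]_d -> Prop) : Prop :=
  (exists (k : nat) (H : 'M[R]_(k, d)) (h : 'cV[R]_k),
      forall z, Z z <-> forall j, (H *m z) j 0 <= h j 0)
  /\ (exists M : R, forall z, Z z -> forall j, `|z j 0| <= M).

Definition origin_interior (d : nat) (Z : 'cV[R]_d -> Prop) : Prop :=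
  exists r : R, 0 < r /\ forall z : 'cV[R]_d, (forall j, `|z j 0| < r) -> Z z.

Definition scale_set (d : nat) (c : R) (Z : 'cV[R]_d -> Prop) : 'cV[R]_d -> Prop :=
  fun z => exists z', Z z' /\ z = c *: z'.

Fixpoint cl_traj (n m p : nat) (Ac : 'M[R]_n) (B : 'M[R]_(n, m)) (L : 'M[R]_(m, p))
    (S : 'M[R]_p) (x : 'cV[R]_n) (w : 'cV[R]_p) (k : nat) : 'cV[R]_n :=
  match k with
  | 0 => x
  | k'.+1 => Ac *m cl_traj Ac B L S x w k' + B *m L *m (S ^+ k' *m w)
  end.

Definition Oinf (n m p : nat) (A : 'M[R]_n) (B : 'M[R]_(n, m)) (K : 'M[R]_(m, n))
    (L : 'M[R]_(m, p)) (S : 'M[R]_p) (eps : R) (Z : 'cV[R]_(n + m) -> Prop)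
    (x : 'cV[R]_n) (w : 'cV[R]_p) : Prop :=
  forall k : nat,
    scale_set (1 - eps) Z
      (col_mx (cl_traj (A + B *m K) B L S x w k)
              (K *m cl_traj (A + B *m K) B L S x w k + L *m (S ^+ k *m w))).

Fixpoint pred_traj (n m p : nat) (Ac : 'M[R]_n) (B : 'M[R]_(n, m)) (L : 'M[R]_(m, p))
    (S : 'M[R]_p) (x : 'cV[R]_n) (wb0 : 'cV[R]_p) (v : nat -> 'cV[R]_m) (k : nat)
    : 'cV[R]_n :=
  match k with
  | 0 => x
  | k'.+1 => Ac *m pred_traj Ac B L S x wb0 v k' + B *m L *m (S ^+ k' *m wb0)
             + B *m v k'
  end.

Definition qp_feasible_sol (n m p N : nat) (A : 'M[R]_n) (B : 'M[R]_(n, m))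
    (K : 'M[R]_(m, n)) (L : 'M[R]_(m, p)) (S : 'M[R]_p) (eps : R)
    (Z : 'cV[R]_(n + m) -> Prop)
    (x : 'cV[R]_n) (w : 'cV[R]_p) (wb0 : 'cV[R]_p) (v : nat -> 'cV[R]_m) : Prop :=
  let xs := pred_traj (A + B *m K) B L S x wb0 v in
  (forall k : nat, (k < N)%N ->
     Z (col_mx (xs k) (K *m xs k + L *m (S ^+ k *m wb0) + v k)))
  /\ Oinf A B K L S eps Z (xs N) (S ^+ N *m wb0).

Definition qp_feasible (n m p N : nat) (A : 'M[R]_n) (B : 'M[R]_(n, m))
    (K : 'M[R]_(m, n)) (L : 'M[R]_(m, p)) (S : 'M[R]_p) (eps : R)
    (Z : 'cV[R]_(n + m) -> Prop) (x : 'cV[R]_n) (w : 'cV[R]_p) : Prop :=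
  exists (wb0 : 'cV[R]_p) (v : nat -> 'cV[R]_m),
    qp_feasible_sol N A B K L S eps Z x w wb0 v.

Definition qp_cost (n m p N : nat) (A : 'M[R]_n) (B : 'M[R]_(n, m))
    (K : 'M[R]_(m, n)) (L : 'M[R]_(m, p)) (S : 'M[R]_p) (Pi : 'M[R]_(n, p))
    (T : 'M[R]_p) (Q P : 'M[R]_n) (Rw : 'M[R]_m)
    (x : 'cV[R]_n) (w : 'cV[R]_p) (wb0 : 'cV[R]_p) (v : nat -> 'cV[R]_m) : R :=
  let xs := pred_traj (A + B *m K) B L S x wb0 v in
  quad T (wb0 - w)
  + \sum_(k < N) quad Q (xs k - Pi *m (S ^+ k *m wb0))
  + \sum_(k < N) quad Rw (v k)
  + quad P (xs N - Pi *m (S ^+ N *m wb0)).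

Definition qp_optimal (n m p N : nat) (A : 'M[R]_n) (B : 'M[R]_(n, m))
    (K : 'M[R]_(m, n)) (L : 'M[R]_(m, p)) (S : 'M[R]_p) (eps : R)
    (Z : 'cV[R]_(n + m) -> Prop) (Pi : 'M[R]_(n, p))
    (T : 'M[R]_p) (Q P : 'M[R]_n) (Rw : 'M[R]_m)
    (x : 'cV[R]_n) (w : 'cV[R]_p) (wb0 : 'cV[R]_p) (v : nat -> 'cV[R]_m) : Prop :=
  qp_feasible_sol N A B K L S eps Z x w wb0 v /\
  forall (wb0' : 'cV[R]_p) (v' : nat -> 'cV[R]_m),
    qp_feasible_sol N A B K L S eps Z x w wb0' v' ->
    qp_cost N A B K L S Pi T Q P Rw x w wb0 v
      <= qp_cost N A B K L S Pi T Q P Rw x w wb0' v'.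

End Defs.

From HB Require Import structures.
From mathcomp Require Import all_boot all_order all_algebra.
From mathcomp Require Import complex.
From mathcomp Require Import lra.
Import Order.TTheory GRing.Theory Num.Theory.
Local Open Scope ring_scope.

(* Recursive feasibility by the shifted candidate: drop the first input of the
   optimizer, advance the artificial reference to [S wb0], and append the zero
   correction [v = 0]. The predicted states are those of the old solution shifted
   by one step; the new last stage is admissible because the old terminal state
   lies in [O_inf], whose tightened set [(1 - eps) Z] is contained in the convex
   set [Z] containing the origin; and [O_inf] is invariant under the closed loop.
   None of the constraints mention the reference [w], so [w(t+1)] is arbitrary. *)

Section Trajectories.
Variables (R : rcfType) (n m p : nat).
Variables (Ac : 'M[R]_n) (B : 'M[R]_(n, m)) (L : 'M[R]_(m, p)) (S : 'M[R]_p).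

Lemma mulmx_exprSr k (w : 'cV[R]_p) : S ^+ k *m (S *m w) = S ^+ k.+1 *m w.
Proof. by rewrite exprSr mulmxA. Qed.

Lemma cl_trajS x w k :
  cl_traj Ac B L S x w k.+1 = cl_traj Ac B L S (cl_traj Ac B L S x w 1) (S *m w) k.
Proof. by elim: k => //= k ->; rewrite mulmx_exprSr. Qed.

Lemma eq_pred_traj x wb (v v' : nat -> 'cV[R]_m) k :
  (forall j, (j < k)%N -> v j = v' j) ->
  pred_traj Ac B L S x wb v k = pred_traj Ac B L S x wb v' k.
Proof.
elim: k => //= k IH eq_v.
by rewrite IH ?eq_v // => j lt_jk; apply: eq_v; rewrite ltnS ltnW.
Qed.

Lemma pred_trajS x wb v k :
  pred_traj Ac B L S x wb v k.+1 =
  pred_traj Ac B L S (pred_traj Ac B L S x wb v 1) (S *m wb) (fun j => v j.+1) k.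
Proof. by elim: k => //= k ->; rewrite mulmx_exprSr. Qed.

Lemma pred_traj_zero_input x wb v k : v k = 0 ->
  pred_traj Ac B L S x wb v k.+1 =
  cl_traj Ac B L S (pred_traj Ac B L S x wb v k) (S ^+ k *m wb) 1.
Proof. by move=> /= ->; rewrite mulmx0 addr0 expr0 mul1mx. Qed.

End Trajectories.

Lemma origin_interior_mem0 (R : rcfType) d (Z : 'cV[R]_d -> Prop) :
  origin_interior Z -> Z 0.
Proof. by case=> r [r_gt0 ball_r]; apply: ball_r => j; rewrite mxE normr0. Qed.

Lemma polytope_scale_set_sub (R : rcfType) d (Z : 'cV[R]_d -> Prop) (c : R) :
  polytope Z -> Z 0 -> 0 <= c <= 1 -> forall z, scale_set c Z z -> Z z.
Proof.
move=> [[k [H [h defZ]]] _] Z0 /andP[c_ge0 c_le1] _ [z [Zz ->]].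
apply/defZ => j; rewrite linearZ /= mxE.
have h_ge0 : 0 <= h j 0 by have := proj1 (defZ 0) Z0 j; rewrite mulmx0 mxE.
apply: le_trans (ler_wpM2l c_ge0 (proj1 (defZ z) Zz j)) _.
by rewrite -[leRHS]mul1r ler_wpM2r.
Qed.

Section MaximalAdmissibleSet.
Variables (R : rcfType) (n m p : nat).
Variables (A : 'M[R]_n) (B : 'M[R]_(n, m)) (K : 'M[R]_(m, n)).
Variables (L : 'M[R]_(m, p)) (S : 'M[R]_p) (eps : R) (Z : 'cV[R]_(n + m) -> Prop).

Lemma Oinf_cl_traj1 x w : Oinf A B K L S eps Z x w ->
  Oinf A B K L S eps Z (cl_traj (A + B *m K) B L S x w 1) (S *m w).
Proof.
by move=> Ox k; rewrite -cl_trajS mulmx_exprSr; apply: Ox.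
Qed.

Lemma Oinf_admissible x w : polytope Z -> Z 0 -> 0 <= eps <= 1 ->
  Oinf A B K L S eps Z x w -> Z (col_mx x (K *m x + L *m w)).
Proof.
move=> polyZ Z0 /andP[eps_ge0 eps_le1] /(_ 0%N) /=; rewrite expr0 mul1mx.
by apply: polytope_scale_set_sub => //; apply/andP; split; lra.
Qed.

Lemma qp_feasible_sol_shift N x w w' wb v :
  polytope Z -> Z 0 -> 0 <= eps <= 1 ->
  qp_feasible_sol N.+1 A B K L S eps Z x w wb v ->
  qp_feasible_sol N.+1 A B K L S eps Z
    (pred_traj (A + B *m K) B L S x wb v 1) w' (S *m wb)
    (fun k => if (k < N)%N then v k.+1 else 0).
Proof.
move=> polyZ Z0 eps01 [stage_ok terminal_ok].
set v' := fun k => _.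
set xs := pred_traj _ B L S x wb v.
have shift k : (k <= N)%N -> pred_traj (A + B *m K) B L S (xs 1) (S *m wb) v' k = xs k.+1.
  move=> le_kN; rewrite /xs pred_trajS; apply: eq_pred_traj => j lt_jk.
  by rewrite /v' (leq_trans lt_jk le_kN).
split => [k lt_kN|].
  rewrite shift // mulmx_exprSr.
  have [lt_kN'|le_Nk] := ltnP k N; first by rewrite /v' lt_kN'; apply: stage_ok.
  have -> : k = N by apply/eqP; rewrite eqn_leq le_Nk andbT -ltnS.
  by rewrite /v' ltnn addr0; apply: Oinf_admissible terminal_ok.
have S_comm : S ^+ N.+1 *m (S *m wb) = S *m (S ^+ N.+1 *m wb).
  by rewrite mulmx_exprSr exprS mulmxA.
rewrite pred_traj_zero_input; last by rewrite /v' ltnn.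
rewrite shift // mulmx_exprSr S_comm.
exact: Oinf_cl_traj1.
Qed.

End MaximalAdmissibleSet.

Theorem lemma5 (R : rcfType) (n m q p rho N : nat)
  (A : 'M[R]_n) (B : 'M[R]_(n, m)) (C : 'M[R]_(q, n))
  (Z : 'cV[R]_(n + m) -> Prop) (K : 'M[R]_(m, n))
  (S : 'M[R]_p) (Qe : 'M[R]_(q, p)) (Pi : 'M[R]_(n, p)) (Gam : 'M[R]_(m, p))
  (eps : R) (T0 T : 'M[R]_p) (Q P : 'M[R]_n) (Rw : 'M[R]_m) :
  (* standing assumptions *)
  (0 < n)%N ->
  controllable A B ->
  polytope Z -> origin_interior Z ->
  schur (A + B *m K) ->
  (0 < rho)%N -> S ^+ rho = 1%:M ->
  (forall l : R[i], eigenvalue (toC S) l ->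
     \rank (block_mx (toC A - l%:M) (toC B) (toC C) (0 : 'M[R[i]]_(q, m))) = (n + q)%N) ->
  A *m Pi + B *m Gam = Pi *m S -> C *m Pi = Qe ->
  0 < eps < 1 ->
  pos_def T0 -> T = \sum_(k < rho) (S ^+ k.+1)^T *m T0 *m S ^+ k.+1 ->
  pos_def Q -> pos_def Rw ->
  (A + B *m K)^T *m P *m (A + B *m K) - P + Q = 0 ->
  (* the lemma *)
  (n <= N)%N ->
  forall (x : 'cV[R]_n) (w : 'cV[R]_p),
    qp_feasible N A B K (Gam - K *m Pi) S eps Z x w ->
  forall (wb0 : 'cV[R]_p) (v : nat -> 'cV[R]_m),
    qp_optimal N A B K (Gam - K *m Pi) S eps Z Pi T Q P Rw x w wb0 v ->
  let u := K *m x + (Gam - K *m Pi) *m wb0 + v 0%N in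
  forall w' : 'cV[R]_p,
    qp_feasible N A B K (Gam - K *m Pi) S eps Z (A *m x + B *m u) w'.
Proof.
move=> n_gt0 _ polyZ originZ _ _ _ _ _ _ /andP[eps_gt0 eps_lt1] _ _ _ _ _ le_nN
  x w _ wb0 v [feasible_opt _] u w'.
have N_gt0 : (0 < N)%N := leq_trans n_gt0 le_nN.
have next_state : A *m x + B *m u =
    pred_traj (A + B *m K) B (Gam - K *m Pi) S x wb0 v 1.
  by rewrite /= /u expr0 mul1mx !(mulmxDl, mulmxDr, mulmxA) !addrA.
rewrite next_state -(prednK N_gt0) in feasible_opt *.
exists (S *m wb0), (fun k => if (k < N.-1)%N then v k.+1 else 0).
apply: qp_feasible_sol_shift feasible_opt => //.
- exact: origin_interior_mem0.
- by apply/andP; split; lra.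
Qed.
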